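(* Let $M$ be a perfect matching in a graph $G$ and let $A \subseteq V(M)$ be a set containing at most one vertex from each edge of $M$. Suppose that $W$ is a shifted $M$-walk both of whose endpoints lie in $A$. Then $W$ contains a shifted $M$-walk $W'$ such that both endpoints of $W'$ lie in $A$ and no other vertices of $W'$ lie in $A$.
   Context: Given a perfect matching $M$ in a graph $G$, a shifted $M$-walk with endpoints $a = v_1$ and $b = v_{2\ell}$ is a walk $v_1 v_2 \dots v_{2\ell}$ in $G$ such that $v_{2i}v_{2i+1} \in M$ for every $1 \leq i \leq \ell - 1$ and $v_{2i-1}v_{2i} \notin M$ for every $1 \leq i \leq \ell$. *)

From mathcomp Require Import all_boot.
Set Implicit Arguments. Unset Strict Implicit. Unset Printing Implicit Defensive.

Definition simple_graph (T : finType) (e : rel T) : Prop :=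
  symmetric e /\ irreflexive e.

Definition perfect_matching (T : finType) (e M : rel T) : Prop :=
  [/\ symmetric M, (forall u v, M u v -> e u v) & (forall v, exists! u, M v u)].

Definition at_most_one_per_edge (T : finType) (M : rel T) (A : {set T}) : Prop :=
  forall u v, M u v -> ~~ ((u \in A) && (v \in A)).

(* s = [:: v_1; ...; v_{2l}] (l >= 1) is a shifted M-walk in G: with 0-based
   index k, the step s_k s_{k+1} is an edge of G not in M when k is even
   (i.e. v_{2i-1} v_{2i}) and an edge of M when k is odd (i.e. v_{2i} v_{2i+1}). *)
Definition shifted_walk (T : finType) (e M : rel T) (s : seq T) : bool :=
  if s is x0 :: _ then
    ~~ odd (size s) &&
    all (fun k => if odd k then M (nth x0 s k) (nth x0 s k.+1)
                  else e (nth x0 s k) (nth x0 s k.+1) && ~~ M (nth x0 s k) (nth x0 s k.+1))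
        (iota 0 (size s).-1)
  else false.

Definition endpoints_in (T : finType) (A : {set T}) (s : seq T) : Prop :=
  exists x0, [/\ s <> [::], head x0 s \in A & last x0 s \in A].

Definition interior_avoids (T : finType) (A : {set T}) (s : seq T) : Prop :=
  forall x0 k, 0 < k -> k < (size s).-1 -> nth x0 s k \notin A.

From mathcomp Require Import all_boot.
From mathcomp Require Import zify.

Set Implicit Arguments.
Unset Strict Implicit.
Unset Printing Implicit Defensive.

(* Proof idea: list the positions of W lying in A.  The first one (0) is even
   and the last one (|W| - 1) is odd, so two consecutive ones i < j have i even
   and j odd.  The segment of W from position i to position j then has even
   length and starts with a non-matching step, so it is again a shifted M-walk,
   with both ends and no interior vertex in A. *)

Lemma exists_consecutive_even_odd (P : pred nat) i j :
  ~~ odd i -> odd j -> i <= j -> P i -> P j ->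
  exists i' j', [/\ i <= i' < j', j' <= j, ~~ odd i' && odd j', P i' && P j'
                  & forall k, i' < k < j' -> ~~ P k].
Proof.
have [n] := ubnP (j - i); elim: n i => // n IH i ltjin ei oj lij Pi Pj.
have ltij : i < j by rewrite ltn_neqAle lij andbT; apply: contraNneq ei => ->.
have exP : exists k, (i < k) && P k by exists j; rewrite ltij.
case: (ex_minnP exP) => m /andP[ltim Pm] minm.
have lemj : m <= j by apply: minm; rewrite ltij.
have noPbetween k : i < k < m -> ~~ P k.
  case/andP=> ltik ltkm; apply: contraTN ltkm => Pk.
  by rewrite -leqNgt; apply: minm; rewrite ltik.
case om: (odd m).
  by exists i, m; split=> //; rewrite ?leqnn ?ltim ?ei ?om ?Pi ?Pm.
have [i' [j' [/andP[lemi' ltij'] lej'j eo PP between]]] :=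
  IH m ltac:(lia) (negbT om) oj lemj Pm Pj.
by exists i', j'; split=> //; rewrite ltij' andbT (ltnW (leq_trans ltim lemi')).
Qed.

Section ShiftedWalks.

Variables (T : finType) (e M : rel T).

Definition alt_step (x : T) (s : seq T) (k : nat) : bool :=
  if odd k then M (nth x s k) (nth x s k.+1)
  else e (nth x s k) (nth x s k.+1) && ~~ M (nth x s k) (nth x s k.+1).

Lemma alt_step_default x y s k : k.+1 < size s -> alt_step x s k = alt_step y s k.
Proof.
by move=> ltks; rewrite /alt_step !(set_nth_default y x) // ltnW.
Qed.

Lemma shifted_walkP x s :
  reflect [/\ 0 < size s, ~~ odd (size s)
              & forall k, k.+1 < size s -> alt_step x s k]
          (shifted_walk e M s).
Proof.
case: s => [|x0 s]; first by constructor; case.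
apply: (iffP andP) => [[ev /allP steps] | [_ ev steps]].
  split=> // k ltks.
  by rewrite (alt_step_default x x0) //; apply: steps; rewrite mem_iota.
split=> //; apply/allP=> k; rewrite mem_iota /= => ltks.
by have := steps k ltks; rewrite (alt_step_default x x0).
Qed.

Definition slice (s : seq T) (i j : nat) : seq T := take (j - i).+1 (drop i s).

Lemma infix_slice s i j : infix (slice s i j) s.
Proof. exact: prefix_infix_trans (prefix_take _ _) (infix_drop _ _). Qed.

Lemma size_slice s i j : i <= j < size s -> size (slice s i j) = (j - i).+1.
Proof. by move=> ijs; rewrite size_take size_drop; case: ltnP; lia. Qed.

Lemma nth_slice x s i j k :
  i <= j < size s -> k <= j - i -> nth x (slice s i j) k = nth x s (i + k).
Proof. by move=> ijs lekji; rewrite nth_take ?nth_drop. Qed.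

Lemma shifted_walk_slice s i j :
  shifted_walk e M s -> ~~ odd i -> odd j -> i < j < size s ->
  shifted_walk e M (slice s i j).
Proof.
move=> walks ei oj /andP[ltij ltjs].
have [x _] : exists x : T, true by case: s ltjs {walks} => // x; exists x.
have [_ _ steps] := elimT (shifted_walkP x s) walks.
have ijs : i <= j < size s by rewrite ltjs ltnW.
apply/(shifted_walkP x); rewrite size_slice //; split=> // [|k ltk].
  by rewrite /= oddB ?(ltnW ltij) // oj (negbTE ei).
have := steps (i + k) ltac:(lia).
by rewrite /alt_step oddD (negbTE ei) -addnS !nth_slice //; lia.
Qed.

End ShiftedWalks.

Theorem lemma5p2 (T : finType) (e M : rel T) (A : {set T}) (W : seq T) :
  simple_graph e ->
  perfect_matching e M ->
  at_most_one_per_edge M A ->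
  shifted_walk e M W ->
  endpoints_in A W ->
  exists W' : seq T,
    [/\ infix W' W, shifted_walk e M W', endpoints_in A W' & interior_avoids A W'].
Proof.
move=> _ _ _ walkW [z [_ headA lastA]].
have [sizeW evW _] := elimT (shifted_walkP e M z W) walkW.
have oddj : odd (size W).-1 by case: (size W) sizeW evW => //= n _ /negPn.
pose P k := nth z W k \in A.
have [P0 Pj] : P 0 /\ P (size W).-1 by rewrite /P nth0 nth_last; split.
have [i [j [/andP[_ ltij] lej /andP[ei oj] /andP[Pi Pj'] between]]] :=
  exists_consecutive_even_odd (i := 0) isT oddj (leq0n _) P0 Pj.
have ijW : i <= j < size W by rewrite ltnW //= (leq_ltn_trans lej) // prednK.
have sizeW' := size_slice ijW.
exists (slice W i j); split.
- exact: infix_slice.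
- by apply: shifted_walk_slice; rewrite // ltij (leq_ltn_trans lej) ?prednK.
- exists z; split; first by move=> W'0; move: sizeW'; rewrite W'0.
    by rewrite -nth0 nth_slice ?addn0.
  by rewrite -nth_last sizeW' nth_slice //= subnKC // ltnW.
- move=> x k k0; rewrite sizeW' /= => ltk.
  rewrite nth_slice ?(set_nth_default z) //; try lia.
  by apply: between; lia.
Qed.
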